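(* Let $a\in\mathbb{R}$, $b>0$, $\mu\in\mathbb{R}$, $\lambda\in(0,1)$, $\gamma\in\mathbb{R}$ and $\Delta\in\mathbb{N}$, and consider the impulsive difference equation $$x_{n+1}=\begin{cases} f(x_n), & n\in\mathbb{N},\ n\notin\{i\Delta: i\in\mathbb{N}\},\\ f(x_n)+\gamma, & n=i\Delta \text{ for some } i\in\mathbb{N},\end{cases}$$ with $f(x)=(1-\lambda)x+\frac{a\lambda}{b}-\frac{\lambda\arctan(\mu x)}{b}$ and arbitrary initial value $x_1\in\mathbb{R}$. Then: (i) every solution $(x_n)_{n\in\mathbb{N}}$ is bounded on $\mathbb{N}$; (ii) let $A=\frac{|a|}{b}+\frac{\pi}{2b}$ and let $k_-<k_+$ be real numbers with $2A\le k_+-k_-$. If $\gamma$ satisfies $$(k_-+A)\bigl(1-(1-\lambda)^{\Delta}\bigr)\le\gamma\le (k_+-A)\bigl(1-(1-\lambda)^{\Delta}\bigr),$$ then the map $F(x)=f^{\Delta}(x)+\gamma$ maps $[k_-,k_+]$ into itself and has a fixed point $x_1^*\in[k_-,k_+]$; consequently the equation has a $\Delta$-periodic orbit (i.e. $x_{n+\Delta}=x_n$ for all $n\in\mathbb{N}$) starting from $x_1^*\in[k_-,k_+]$.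
   Context: $f^{\Delta}$ denotes the $\Delta$-fold composition of $f$. The solution of the impulsive equation satisfies $x_{i\Delta+1}=F^i(x_1)$ for all $i\in\mathbb{N}$, where $F=f^\Delta+\gamma$. This equation models a supply and demand (price expectation) model perturbed by a constant impulse $\gamma$ every $\Delta$ steps. *)

From Stdlib Require Import Reals Lra Lia.
Open Scope R_scope.

Definition fmap (a b mu lam : R) (x : R) : R :=
  (1 - lam) * x + a * lam / b - lam * atan (mu * x) / b.

Definition Fmap (a b mu lam gam : R) (Delta : nat) (x : R) : R :=
  Nat.iter Delta (fmap a b mu lam) x + gam.

(* x : nat -> R is a solution of the impulsive equation, indices n >= 1
   (N = {1,2,...}); the value x 1 is the (arbitrary) initial value. *)
Definition is_solution (a b mu lam gam : R) (Delta : nat) (x : nat -> R) : Prop :=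
  forall n : nat, (1 <= n)%nat ->
    ((exists i : nat, (1 <= i)%nat /\ n = (i * Delta)%nat) ->
        x (S n) = fmap a b mu lam (x n) + gam) /\
    (~ (exists i : nat, (1 <= i)%nat /\ n = (i * Delta)%nat) ->
        x (S n) = fmap a b mu lam (x n)).

(* f is a contraction with factor 1 - lam, perturbed by a term of size at most lam A
   (|atan| < pi/2).  Hence |x_{n+1}| <= (1 - lam) |x_n| + lam A + |gam|, which bounds
   every solution.  Iterating, f^Delta(y) lies within A (1 - (1 - lam)^Delta) of
   (1 - lam)^Delta y, and the condition on gam is exactly what makes F = f^Delta + gam
   map [km, kp] into itself; the intermediate value theorem yields a fixed point xs.
   A solution starting at xs satisfies x_{1+Delta} = F(xs) = xs, and since n and
   n + Delta are impulse times simultaneously, the equality propagates to all n. *)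
From Stdlib Require Import Reals Lra Lia Classical.
Open Scope R_scope.

Lemma continuous_self_map_fixed_point (g : R -> R) (lo hi : R) :
  continuity g -> lo <= hi -> (forall y, lo <= y <= hi -> lo <= g y <= hi) ->
  exists x, lo <= x <= hi /\ g x = x.
Proof.
  intros hg hlohi hmaps.
  destruct (hmaps lo) as [hlo _]; [lra |].
  destruct (hmaps hi) as [_ hhi]; [lra |].
  destruct (IVT_cor (fun y => g y - y) lo hi) as [x [hx hgx]].
  - intro y. apply continuity_pt_minus; [apply hg | apply derivable_continuous_pt, derivable_pt_id].
  - exact hlohi.
  - nra.
  - exists x. split; [exact hx | lra].
Qed.

Lemma contraction_bound (u : nat -> R) (c K : R) :
  0 <= c < 1 ->
  (forall n, (1 <= n)%nat -> Rabs (u (S n)) <= c * Rabs (u n) + K) ->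
  forall n, (1 <= n)%nat -> Rabs (u n) <= Rmax (Rabs (u 1%nat)) (K / (1 - c)).
Proof.
  intros hc hstep n hn.
  set (M := Rmax (Rabs (u 1%nat)) (K / (1 - c))).
  assert (hKM : K <= (1 - c) * M).
  { apply (Rmult_le_reg_r (/ (1 - c))); [apply Rinv_0_lt_compat; lra |].
    replace ((1 - c) * M * / (1 - c)) with M by (field; lra).
    apply Rmax_r. }
  induction n as [|n IH]; [lia |].
  destruct (Nat.eq_dec n 0) as [-> | hn0]; [apply Rmax_l |].
  specialize (IH ltac:(lia)).
  pose proof (hstep n ltac:(lia)).
  assert (c * Rabs (u n) <= c * M) by (apply Rmult_le_compat_l; lra).
  lra.
Qed.

Section Map.

Variables a b mu lam : R.
Hypothesis hb : 0 < b.
Hypothesis hlam0 : 0 < lam.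
Hypothesis hlam1 : lam < 1.

Let A := Rabs a / b + PI / (2 * b).

Lemma fmap_sub_contraction (z : R) : Rabs (fmap a b mu lam z - (1 - lam) * z) <= lam * A.
Proof.
  replace (fmap a b mu lam z - (1 - lam) * z) with (lam / b * (a - atan (mu * z)))
    by (unfold fmap; field; lra).
  replace (lam * A) with (lam / b * (Rabs a + PI / 2)) by (unfold A; field; lra).
  assert (hq : 0 < lam / b) by (apply Rdiv_lt_0_compat; lra).
  rewrite Rabs_mult, (Rabs_pos_eq (lam / b)) by lra.
  apply Rmult_le_compat_l; [lra |].
  eapply Rle_trans; [apply Rabs_triang |].
  rewrite Rabs_Ropp.
  destruct (atan_bound (mu * z)).
  apply Rplus_le_compat_l, Rabs_le; lra.
Qed.

Lemma iter_fmap_sub_contraction (k : nat) (y : R) :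
  Rabs (Nat.iter k (fmap a b mu lam) y - (1 - lam) ^ k * y) <= A * (1 - (1 - lam) ^ k).
Proof.
  induction k as [|k IH]; simpl.
  - rewrite Rmult_1_l, Rminus_diag, Rabs_R0. lra.
  - set (z := Nat.iter k (fmap a b mu lam) y) in *.
    replace (fmap a b mu lam z - (1 - lam) * (1 - lam) ^ k * y)
      with ((fmap a b mu lam z - (1 - lam) * z) + (1 - lam) * (z - (1 - lam) ^ k * y))
      by ring.
    eapply Rle_trans; [apply Rabs_triang |].
    rewrite Rabs_mult, (Rabs_pos_eq (1 - lam)) by lra.
    pose proof (fmap_sub_contraction z).
    assert ((1 - lam) * Rabs (z - (1 - lam) ^ k * y) <= (1 - lam) * (A * (1 - (1 - lam) ^ k)))
      by (apply Rmult_le_compat_l; lra).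
    lra.
Qed.

Lemma fmap_continuous : continuity (fmap a b mu lam).
Proof.
  intro x. unfold fmap.
  apply continuity_pt_minus; [apply continuity_pt_plus |].
  - apply continuity_pt_mult; [apply continuity_pt_const; now intros ? ? | apply derivable_continuous_pt, derivable_pt_id].
  - apply continuity_pt_const; now intros ? ?.
  - apply continuity_pt_div; [| apply continuity_pt_const; now intros ? ? | lra].
    apply continuity_pt_mult; [apply continuity_pt_const; now intros ? ? |].
    apply (continuity_pt_comp (fun x => mu * x) atan).
    + apply continuity_pt_mult; [apply continuity_pt_const; now intros ? ? | apply derivable_continuous_pt, derivable_pt_id].
    + apply derivable_continuous_pt, derivable_pt_atan.
Qed.

Lemma iter_fmap_continuous (k : nat) : continuity (Nat.iter k (fmap a b mu lam)).
Proof.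
  induction k as [|k IH]; intro x.
  - apply derivable_continuous_pt, derivable_pt_id.
  - apply (continuity_pt_comp (Nat.iter k (fmap a b mu lam)) (fmap a b mu lam));
      [apply IH | apply fmap_continuous].
Qed.

Lemma Fmap_maps_interval (gam km kp : R) (Delta : nat) :
  (km + A) * (1 - (1 - lam) ^ Delta) <= gam ->
  gam <= (kp - A) * (1 - (1 - lam) ^ Delta) ->
  forall y, km <= y <= kp -> km <= Fmap a b mu lam gam Delta y <= kp.
Proof.
  intros hgam_lo hgam_hi y hy. unfold Fmap.
  pose proof (iter_fmap_sub_contraction Delta y) as hdev.
  pose proof (Rle_abs (Nat.iter Delta (fmap a b mu lam) y - (1 - lam) ^ Delta * y)).
  pose proof (Rle_abs (- (Nat.iter Delta (fmap a b mu lam) y - (1 - lam) ^ Delta * y))).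
  rewrite Rabs_Ropp in *.
  assert (hq : 0 <= (1 - lam) ^ Delta) by (apply pow_le; lra).
  assert ((1 - lam) ^ Delta * km <= (1 - lam) ^ Delta * y) by (apply Rmult_le_compat_l; lra).
  assert ((1 - lam) ^ Delta * y <= (1 - lam) ^ Delta * kp) by (apply Rmult_le_compat_l; lra).
  lra.
Qed.

Lemma Fmap_continuous (gam : R) (Delta : nat) : continuity (Fmap a b mu lam gam Delta).
Proof.
  intro x. apply continuity_pt_plus;
    [apply iter_fmap_continuous | apply continuity_pt_const; now intros ? ?].
Qed.

Lemma solution_abs_step (gam : R) (Delta : nat) (x : nat -> R) (n : nat) :
  is_solution a b mu lam gam Delta x -> (1 <= n)%nat ->
  Rabs (x (S n)) <= (1 - lam) * Rabs (x n) + (lam * A + Rabs gam).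
Proof.
  intros hsol hn.
  assert (hf : Rabs (fmap a b mu lam (x n)) <= (1 - lam) * Rabs (x n) + lam * A).
  { pose proof (fmap_sub_contraction (x n)).
    pose proof (Rabs_triang_inv (fmap a b mu lam (x n)) ((1 - lam) * x n)).
    rewrite Rabs_mult, (Rabs_pos_eq (1 - lam)) in * by lra. lra. }
  destruct (hsol n hn) as [himp hfree].
  destruct (classic (exists i, (1 <= i)%nat /\ n = (i * Delta)%nat)) as [h | h].
  - rewrite (himp h). pose proof (Rabs_triang (fmap a b mu lam (x n)) gam). lra.
  - rewrite (hfree h). pose proof (Rabs_pos gam). lra.
Qed.

End Map.

Section Solutions.

Variables (a b mu lam gam : R) (Delta : nat) (x : nat -> R).
Hypothesis hDelta : (1 <= Delta)%nat.
Hypothesis hsol : is_solution a b mu lam gam Delta x.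

Definition impulse_time (n : nat) : Prop := exists i : nat, (1 <= i)%nat /\ n = (i * Delta)%nat.

Lemma impulse_time_add_period (n : nat) :
  (1 <= n)%nat -> impulse_time (n + Delta) <-> impulse_time n.
Proof.
  intros hn; unfold impulse_time; split.
  - intros [[|[|i]] [hi e]]; try lia.
    exists (S i); split; [lia |]. simpl in e. lia.
  - intros [i [hi e]]. exists (S i). split; [lia |]. simpl. lia.
Qed.

Lemma solution_first_period (k : nat) :
  (k < Delta)%nat -> x (S k) = Nat.iter k (fmap a b mu lam) (x 1%nat).
Proof.
  induction k as [|k IH]; intros hk; [reflexivity |].
  destruct (hsol (S k) ltac:(lia)) as [_ hfree].
  rewrite hfree, IH by (lia || (intros [[|i] [hi e]]; simpl in e; lia)).
  reflexivity.
Qed.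

Lemma solution_period_step : x (S Delta) = Fmap a b mu lam gam Delta (x 1%nat).
Proof.
  destruct (hsol Delta hDelta) as [himp _].
  rewrite himp by (exists 1%nat; split; lia).
  replace Delta with (S (Nat.pred Delta)) by lia.
  rewrite solution_first_period by lia.
  reflexivity.
Qed.

Lemma solution_shift_step (n : nat) :
  (1 <= n)%nat -> x (n + Delta)%nat = x n -> x (S n + Delta)%nat = x (S n).
Proof.
  intros hn heq.
  destruct (hsol n hn) as [himp hfree].
  destruct (hsol (n + Delta)%nat ltac:(lia)) as [himp' hfree'].
  pose proof (impulse_time_add_period n hn) as hiff.
  unfold impulse_time in hiff.
  replace (S n + Delta)%nat with (S (n + Delta)) by lia.
  destruct (classic (impulse_time n)) as [h | h].
  - rewrite himp', himp, heq by (tauto || exact h). reflexivity.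
  - rewrite hfree', hfree, heq by (tauto || exact h). reflexivity.
Qed.

Lemma solution_periodic_of_fixed_point :
  Fmap a b mu lam gam Delta (x 1%nat) = x 1%nat ->
  forall n, (1 <= n)%nat -> x (n + Delta)%nat = x n.
Proof.
  intros hfix n hn.
  induction n as [|n IH]; [lia |].
  destruct (Nat.eq_dec n 0) as [-> | hn0].
  - rewrite <- hfix. apply solution_period_step.
  - apply solution_shift_step; [lia | apply IH; lia].
Qed.

End Solutions.

Theorem theorem1 (a b mu lam gam : R) (Delta : nat)
  (hb : 0 < b) (hl0 : 0 < lam) (hl1 : lam < 1) (hD : (1 <= Delta)%nat) :
  (forall x : nat -> R, is_solution a b mu lam gam Delta x ->
     exists M : R, forall n : nat, (1 <= n)%nat -> Rabs (x n) <= M) /\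
  (forall km kp : R,
     let A := Rabs a / b + PI / (2 * b) in
     km < kp -> 2 * A <= kp - km ->
     (km + A) * (1 - (1 - lam) ^ Delta) <= gam ->
     gam <= (kp - A) * (1 - (1 - lam) ^ Delta) ->
     (forall y : R, km <= y <= kp ->
        km <= Fmap a b mu lam gam Delta y <= kp) /\
     exists xs : R, km <= xs <= kp /\
       Fmap a b mu lam gam Delta xs = xs /\
       forall x : nat -> R, is_solution a b mu lam gam Delta x -> x 1%nat = xs ->
         forall n : nat, (1 <= n)%nat -> x (n + Delta)%nat = x n).
Proof.
  split.
  - intros x hsol.
    eexists. apply (contraction_bound x (1 - lam)); [lra | intros n hn].
    exact (solution_abs_step a b mu lam hb hl0 hl1 gam Delta x n hsol hn).
  - intros km kp A hk _ hgam_lo hgam_hi.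
    pose proof (Fmap_maps_interval a b mu lam hb hl0 hl1 gam km kp Delta hgam_lo hgam_hi)
      as hmaps.
    split; [exact hmaps |].
    destruct (continuous_self_map_fixed_point _ km kp
                (Fmap_continuous a b mu lam hb gam Delta) ltac:(lra) hmaps)
      as [xs [hxs hfix]].
    exists xs. split; [exact hxs |]. split; [exact hfix |].
    intros x hsol hx1. subst xs.
    exact (solution_periodic_of_fixed_point a b mu lam gam Delta x hD hsol hfix).
Qed.
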